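(* Let $A_2\in\mathbf{C}^{n\times n}$. Then $\mathrm{e}^{t\{0,A_2\}}=\{\Phi_1(t),\Phi_2(t)\}$ for $t\in\mathbf{R}^+=[0,\infty)$ and $\{0,A_2\}^t=\{\Phi_1(t),\Phi_2(t)\}$ for $t\in\mathbf{Z}^+=\{0,1,2,\dots\}$, where $$\Phi_1(t)=\begin{cases}\sum_{i=0}^\infty\frac{t^{2i}}{(2i)!}(A_2^{\#}A_2)^i, & t\in\mathbf{R}^+,\\ (A_2^{\#}A_2)^{t/2}, & t\in\mathbf{Z}^+,\ t \text{ even},\\ 0, & t\in\mathbf{Z}^+,\ t\text{ odd},\end{cases}\qquad \Phi_2(t)=\begin{cases}\sum_{i=0}^\infty\frac{t^{2i+1}}{(2i+1)!}A_2(A_2^{\#}A_2)^i, & t\in\mathbf{R}^+,\\ 0, & t\in\mathbf{Z}^+,\ t \text{ even},\\ A_2(A_2^{\#}A_2)^{(t-1)/2}, & t\in\mathbf{Z}^+,\ t\text{ odd}.\end{cases}$$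
   Context: $P^{\#}$ denotes entrywise conjugate. For $A_1,A_2\in\mathbf{C}^{n\times n}$ the bimatrix $\{A_1,A_2\}$ is the real-linear map $x\mapsto A_1x+A_2^{\#}x^{\#}$ on $\mathbf{C}^n$; products are compositions and equality means equality as maps. Powers: $\{A_1,A_2\}^0=\{I_n,0\}$, $\{A_1,A_2\}^i=\{A_1,A_2\}\{A_1,A_2\}^{i-1}$. Exponent: $\mathrm{e}^{t\{A_1,A_2\}}=\sum_{i=0}^\infty\frac{t^i}{i!}\{A_1,A_2\}^i$, $t\in\mathbf{R}$. *)

From HB Require Import structures.
From mathcomp Require Import all_boot all_order all_algebra.
From mathcomp Require Import all_classical all_reals all_analysis.
From mathcomp Require Import complex.
Export numFieldTopology.Exports numFieldNormedType.Exports.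

Set Implicit Arguments.
Unset Strict Implicit.
Unset Printing Implicit Defensive.

Import Order.TTheory GRing.Theory Num.Theory.
Local Open Scope classical_set_scope.
Local Open Scope ring_scope.

(* Topology / norm on C = R[i]: the usual one, given by the modulus. *)
HB.instance Definition _ (R : realType) := PseudoPointedMetric.copy R[i] (R[i])^o.
HB.instance Definition _ (R : realType) := NormedModule.copy R[i] (R[i])^o.

Section Bimatrix.
Variables (R : realType) (n : nat).
Local Notation C := R[i].

Definition conjm (m p : nat) (P : 'M[C]_(m, p)) : 'M[C]_(m, p) :=
  map_mx (@conjc R) P.

(* the bimatrix {A1, A2} as the real-linear map x |-> A1 x + A2^# x^# *)
Definition bimat (A1 A2 : 'M[C]_n) : 'cV[C]_n -> 'cV[C]_n :=
  fun x => A1 *m x + conjm A2 *m conjm x.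

Fixpoint bipow (A1 A2 : 'M[C]_n) (i : nat) : 'cV[C]_n -> 'cV[C]_n :=
  match i with
  | 0 => bimat 1%:M 0
  | i'.+1 => fun x => bimat A1 A2 (bipow A1 A2 i' x)
  end.

(* e^{t{A1,A2}} = F (as maps): for every x, the series
   sum_i t^i/i! {A1,A2}^i x converges to F x. *)
Definition bimexp_eq (A1 A2 : 'M[C]_n) (t : R) (F : 'cV[C]_n -> 'cV[C]_n)
  : Prop :=
  forall x : 'cV[C]_n,
    series (fun i => ((t ^+ i / (i`!)%:R)%:C)%C *: bipow A1 A2 i x) @ \oo
      --> F x.

Definition Phi1R_term (A2 : 'M[C]_n) (t : R) (i : nat) : 'M[C]_n :=
  ((t ^+ (2 * i) / ((2 * i)`!)%:R)%:C)%C *: (conjm A2 *m A2) ^+ i.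

Definition Phi2R_term (A2 : 'M[C]_n) (t : R) (i : nat) : 'M[C]_n :=
  ((t ^+ (2 * i).+1 / (((2 * i).+1)`!)%:R)%:C)%C *: (A2 *m (conjm A2 *m A2) ^+ i).

Definition Phi1R (A2 : 'M[C]_n) (t : R) : 'M[C]_n := limn (series (Phi1R_term A2 t)).
Definition Phi2R (A2 : 'M[C]_n) (t : R) : 'M[C]_n := limn (series (Phi2R_term A2 t)).

Definition Phi1Z (A2 : 'M[C]_n) (k : nat) : 'M[C]_n :=
  if odd k then 0 else (conjm A2 *m A2) ^+ k./2.

Definition Phi2Z (A2 : 'M[C]_n) (k : nat) : 'M[C]_n :=
  if odd k then A2 *m (conjm A2 *m A2) ^+ (k.-1)./2 else 0.

End Bimatrix.

(* Since {0, A2} x = A2^# x^#, two steps give {0, A2}^2 = {A2^# A2, 0}: the even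
   powers are (A2^# A2)^j and the odd ones {0, A2 (A2^# A2)^j}, which is the
   integer case.  For real t, the partial sums of the exponential series taken
   at even and at odd indices are partial sums of Phi_1(t) x + Phi_2(t)^# x^#.
   Both matrix series are dominated by exponential series, because the
   max-entry norm is submultiplicative up to the factor n, so they converge once
   C = R[i] is known to be complete; the full series then converges since its
   even and odd subsequences of partial sums have the same limit. *)

From HB Require Import structures.
From mathcomp Require Import all_boot all_order all_algebra.
From mathcomp Require Import all_classical all_reals all_analysis.
From mathcomp Require Import complex.
From mathcomp Require Import zify ring.
Import Order.TTheory GRing.Theory Num.Theory.
Set Implicit Arguments.
Unset Strict Implicit.
Unset Printing Implicit Defensive.
Local Open Scope classical_set_scope.
Local Open Scope ring_scope.

Section ComplexComplete.
Variable R : realType.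
Local Notation C := R[i].

Lemma normc_ge_Im (z : C) : (`|complex.Im z|)%:C%C <= `|z|.
Proof.
by case: z => a b; rewrite normc_def lecR /= -sqrtr_sqr ler_wsqrtr // lerDr sqr_ge0.
Qed.

Lemma normc_le_ReIm (z : C) :
  `|z| <= (`|complex.Re z| + `|complex.Im z|)%:C%C.
Proof.
rewrite normc_def lecR -[X in _ <= X]ger0_norm ?addr_ge0 // -sqrtr_sqr.
apply: ler_wsqrtr; rewrite sqrrD -[complex.Re z ^+ 2]real_normK ?num_real //.
by rewrite -[complex.Im z ^+ 2]real_normK ?num_real // addrAC lerDl mulrn_wge0 ?mulr_ge0.
Qed.

Lemma complex_cauchy_cvg (F : set_system C) : ProperFilter F -> cauchy F -> cvg F.
Proof.
move=> FF /cauchyP F_cauchy.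
have cvg_lipschitz (f : C -> R) :
    (forall x y, (`|f x - f y|)%:C%C <= `|x - y|) -> cvg (f @ F).
  move=> f_lip; apply: cauchy_cvg; apply: cauchy_exP => e e_gt0.
  have [|x Fx] := F_cauchy e%:C%C; first by rewrite ltcR.
  exists (f x) => /=; move: Fx; apply: filterS => y.
  by rewrite -!ball_normE /= -ltcR; apply: le_lt_trans.
have /cvg_lipschitz /cvgrPdist_lt cvg_Re : forall x y : C,
    (`|complex.Re x - complex.Re y|)%:C%C <= `|x - y|.
  by move=> [? ?] [? ?]; exact: (normc_ge_Re (_ +i* _)%C).
have /cvg_lipschitz /cvgrPdist_lt cvg_Im : forall x y : C,
    (`|complex.Im x - complex.Im y|)%:C%C <= `|x - y|.
  by move=> [? ?] [? ?]; exact: (normc_ge_Im (_ +i* _)%C).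
apply/cvg_ex; exists (lim (@complex.Re R @ F) +i* lim (@complex.Im R @ F))%C.
apply/cvgrPdist_lt => -[r ?]; rewrite ltcE /= => /andP[/eqP -> r_gt0].
near=> t; apply: le_lt_trans (normc_le_ReIm _) _.
rewrite ltcR (splitr r) !raddfB /=; apply: ltrD.
- by near: t; apply: cvg_Re; rewrite divr_gt0.
- by near: t; apply: cvg_Im; rewrite divr_gt0.
Unshelve. all: by end_near. Qed.

End ComplexComplete.

HB.instance Definition _ (R : realType) :=
  Uniform_isComplete.Build R[i] (@complex_cauchy_cvg R).

Section MatrixNorm.
Variable K : numDomainType.

Lemma mx_norm_entry_le m p (M : 'M[K]_(m, p)) i j : `|M i j| <= `|M|.
Proof.
rewrite [`|M|]mx_normE -[leLHS]nngE num_le.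
exact: (le_bigmax _ _ (i, j)).
Qed.

Lemma mx_norm_le m p (M : 'M[K]_(m, p)) (c : K) :
  0 <= c -> (forall i j, `|M i j| <= c) -> `|M| <= c.
Proof.
move=> c_ge0 M_le; have [->//|/mx_norm_neq0 [[i j] M_ij]] := eqVneq `|M| 0.
by rewrite (_ : `|M| = `|M i j|).
Qed.

Lemma mx_norm_mulmx m k p (A : 'M[K]_(m, k)) (B : 'M[K]_(k, p)) :
  `|A *m B| <= k%:R * (`|A| * `|B|).
Proof.
apply: mx_norm_le => [|i j]; first by rewrite !mulr_ge0.
rewrite mxE mulr_natl -[k in _ *+ k]card_ord -sumr_const.
apply: le_trans (ler_norm_sum _ _ _) _.
by apply: ler_sum => l _; rewrite normrM ler_pM ?mx_norm_entry_le.
Qed.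

Lemma mx_norm_expr n (A : 'M[K]_n) k : `|A ^+ k| <= (n%:R * `|A|) ^+ k.
Proof.
elim: k => [|k IHk].
  rewrite !expr0; apply: mx_norm_le => // i j.
  by rewrite mxE; case: eqP; rewrite ?normr1 ?normr0.
rewrite exprS -mulmxE exprS; apply: le_trans (mx_norm_mulmx _ _) _.
by rewrite -mulrA ler_wpM2l ?ler_wpM2l.
Qed.

End MatrixNorm.

Lemma cvg_mulmxr (K : numFieldType) (T : Type) (F : set_system T) {FF : Filter F}
    m k p (f : T -> 'M[K]_(m, k)) (L : 'M[K]_(m, k)) (B : 'M[K]_(k, p)) :
  f @ F --> L -> (fun x => f x *m B) @ F --> L *m B.
Proof.
move=> /cvgrPdist_lt f_cvg; apply/cvgrPdist_lt => e e_gt0.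
have c_gt0 : 0 < k%:R * `|B| + 1 by rewrite ltr_wpDl ?mulr_ge0.
apply: filterS (f_cvg _ (divr_gt0 e_gt0 c_gt0)) => x.
rewrite -mulmxBl ltr_pdivlMr // => near_L.
apply: le_lt_trans (mx_norm_mulmx _ _) (le_lt_trans _ near_L).
by rewrite mulrCA mulrDr mulr1 lerDl.
Qed.

Lemma cvg_even_odd (T : topologicalType) (s : nat -> T) (L : T) :
  (fun k => s k.*2) @ \oo --> L -> (fun k => s k.*2.+1) @ \oo --> L ->
  s @ \oo --> L.
Proof.
move=> s_even s_odd U L_U.
have [N1 _ N1_U] := s_even U L_U; have [N2 _ N2_U] := s_odd U L_U.
exists (N1 + N2).*2 => // k /=; rewrite -[k]odd_double_half.
case: (odd k) => /= le_k; [apply: (N2_U k./2) | apply: (N1_U k./2)] => /=;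
  move: le_k; rewrite -!addnn; lia.
Qed.

Lemma cvg_series_exp_coeff_double (R : realType) (t q : R) r :
  0 <= t -> 0 <= q ->
  cvgn (series (fun k => t ^+ (2 * k + r) / ((2 * k + r)`!)%:R * q ^+ k)).
Proof.
move=> t_ge0 q_ge0.
apply: (@series_le_cvg _ _ (fun k => t ^+ r * exp_coeff (t ^+ 2 * q) k)) => [k|k|k|].
- by rewrite mulr_ge0 ?divr_ge0 ?exprn_ge0.
- by rewrite mulr_ge0 ?exp_coeff_ge0 ?exprn_ge0 ?mulr_ge0 ?sqr_ge0.
- rewrite /exp_coeff /= exprMn -exprM [leLHS](_ : _ =
    t ^+ r * (t ^+ (2 * k) * q ^+ k / ((2 * k + r)`!)%:R)); last first.
    by rewrite exprD; ring.
  rewrite ler_wpM2l ?exprn_ge0 // ler_wpM2l ?mulr_ge0 ?exprn_ge0 //.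
  by rewrite lef_pV2 ?posrE ?ltr0n ?fact_gt0 // ler_nat leq_fact //; lia.
- exact/is_cvg_seriesZ/is_cvg_series_exp_coeff.
Qed.

Section ComplexMatrix.
Variable R : realType.
Local Notation C := R[i].

Lemma conjmK m p : involutive (@conjm R m p).
Proof. by move=> A; apply/matrixP => i j; rewrite !mxE conjcK. Qed.

Lemma conjm0 m p : conjm (0 : 'M[C]_(m, p)) = 0.
Proof. exact: map_mx0. Qed.

Lemma conjmD m p (A B : 'M[C]_(m, p)) : conjm (A + B) = conjm A + conjm B.
Proof. exact: map_mxD. Qed.

Lemma conjmB m p (A B : 'M[C]_(m, p)) : conjm (A - B) = conjm A - conjm B.
Proof. exact: map_mxB. Qed.

Lemma conjmM m k p (A : 'M[C]_(m, k)) (B : 'M[C]_(k, p)) :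
  conjm (A *m B) = conjm A *m conjm B.
Proof. exact: map_mxM. Qed.

Lemma conjmZ_real m p (a : R) (A : 'M[C]_(m, p)) :
  conjm (a%:C%C *: A) = a%:C%C *: conjm A.
Proof. by rewrite /conjm map_mxZ /= oppr0. Qed.

Lemma mx_norm_conjm m p (A : 'M[C]_(m, p)) : `|conjm A| = `|A|.
Proof.
apply/le_anti/andP; split; apply: mx_norm_le => // i j.
- by rewrite mxE normcJ mx_norm_entry_le.
- by have := mx_norm_entry_le (conjm A) i j; rewrite mxE normcJ.
Qed.

Lemma cvg_conjm (T : Type) (F : set_system T) {FF : Filter F} m p
    (f : T -> 'M[C]_(m, p)) (L : 'M[C]_(m, p)) :
  f @ F --> L -> (fun x => conjm (f x)) @ F --> conjm L.
Proof.
move=> /cvgrPdist_lt f_cvg; apply/cvgrPdist_lt => e /f_cvg.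
by apply: filterS => x; rewrite -conjmB mx_norm_conjm.
Qed.

Lemma series_norm_le_cvg m p (u : 'M[C]_(m, p) ^nat) (b : R ^nat) :
  (forall k, `|u k| <= (b k)%:C%C) -> cvgn (series b) -> cvgn (series u).
Proof.
move=> u_le /cauchy_cvgP/cauchy_seriesP b_cauchy.
apply/cauchy_cvgP/cauchy_seriesP => -[r ?]; rewrite ltcE /= => /andP[/eqP -> r_gt0].
apply: filterS (b_cauchy r r_gt0) => -[k1 k2] /= b_small.
apply: le_lt_trans (ler_norm_sum _ _ _) _.
apply: le_lt_trans (ler_sum _ (fun k _ => u_le k)) _.
by rewrite -rmorph_sum ltcR (le_lt_trans (ler_norm _) b_small).
Qed.

End ComplexMatrix.

Section ZeroBimatrix.
Variables (R : realType) (n : nat) (A2 : 'M[R[i]]_n).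
Local Notation M := (conjm A2 *m A2).

Lemma bipow_double j x : bipow 0 A2 j.*2 x = M ^+ j *m x.
Proof.
elim: j x => [|j IHj] x; first by rewrite /= /bimat conjm0 !mul0mx addr0 mul1mx.
rewrite doubleS /= /bimat IHj !mul0mx !add0r conjmM !conjmK.
by rewrite exprS -mulmxE !mulmxA.
Qed.

Lemma bipow_doubleS j x : bipow 0 A2 j.*2.+1 x = conjm (A2 *m M ^+ j) *m conjm x.
Proof.
rewrite [LHS]/= bipow_double /bimat mul0mx add0r.
by rewrite !conjmM mulmxA.
Qed.

Lemma bipow0_Phi k x : bipow 0 A2 k x = bimat (Phi1Z A2 k) (Phi2Z A2 k) x.
Proof.
rewrite -[k]odd_double_half /Phi1Z /Phi2Z; case: (odd k).
  by rewrite bipow_doubleS /= odd_double half_double /bimat mul0mx add0r.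
by rewrite bipow_double /= odd_double half_double /bimat conjm0 mul0mx addr0.
Qed.

Local Notation q := (n%:R * complex.Re `|M|).

Let q_ge0 : 0 <= q.
Proof. by move: (normr_ge0 M); rewrite lecE => /andP[_ ?]; rewrite mulr_ge0. Qed.

Lemma mx_norm_exprM k : `|M ^+ k| <= (q ^+ k)%:C%C.
Proof.
apply: le_trans (mx_norm_expr _ _) _.
by rewrite -(RRe_real (normr_real M)) -(rmorph_nat (real_complex R)) -rmorphM -rmorphXn.
Qed.

Section RealTime.
Variable t : R.
Hypothesis t_ge0 : 0 <= t.

Lemma mx_norm_Phi1R_term k :
  `|Phi1R_term A2 t k| <= (t ^+ (2 * k + 0) / ((2 * k + 0)`!)%:R * q ^+ k)%:C%C.
Proof.
have c_ge0 : 0 <= t ^+ (2 * k) / ((2 * k)`!)%:R by rewrite divr_ge0 ?exprn_ge0.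
rewrite /Phi1R_term normrZ addn0 [leRHS]rmorphM ger0_norm ?ler0c //.
by rewrite ler_wpM2l ?ler0c ?mx_norm_exprM.
Qed.

Lemma mx_norm_Phi2R_term k :
  `|Phi2R_term A2 t k| <=
  (n%:R * complex.Re `|A2| * (t ^+ (2 * k + 1) / ((2 * k + 1)`!)%:R * q ^+ k))%:C%C.
Proof.
have c_ge0 : 0 <= t ^+ (2 * k).+1 / ((2 * k).+1`!)%:R by rewrite divr_ge0 ?exprn_ge0.
rewrite /Phi2R_term normrZ addn1 ger0_norm ?ler0c //.
rewrite mulrCA [leRHS]rmorphM ler_wpM2l ?ler0c //.
apply: le_trans (mx_norm_mulmx _ _) _.
rewrite !rmorphM rmorph_nat -mulrA ler_wpM2l // ler_pM ?mx_norm_exprM //.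
by rewrite -[leLHS](RRe_real (normr_real A2)); exact: lexx.
Qed.

Lemma cvg_Phi1R : cvgn (series (Phi1R_term A2 t)).
Proof.
apply: (series_norm_le_cvg mx_norm_Phi1R_term).
exact: cvg_series_exp_coeff_double.
Qed.

Lemma cvg_Phi2R : cvgn (series (Phi2R_term A2 t)).
Proof.
apply: (series_norm_le_cvg mx_norm_Phi2R_term).
exact/is_cvg_seriesZ/cvg_series_exp_coeff_double.
Qed.

Let exp_term x i := (t ^+ i / (i`!)%:R)%:C%C *: bipow 0 A2 i x.

Lemma exp_term_double x k : exp_term x k.*2 = Phi1R_term A2 t k *m x.
Proof. by rewrite /exp_term bipow_double /Phi1R_term -scalemxAl mul2n. Qed.

Lemma exp_term_doubleS x k :
  exp_term x k.*2.+1 = conjm (Phi2R_term A2 t k) *m conjm x.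
Proof. by rewrite /exp_term bipow_doubleS /Phi2R_term conjmZ_real scalemxAl mul2n. Qed.

Lemma series_exp_term_double x k :
  series (exp_term x) k.*2 =
  series (Phi1R_term A2 t) k *m x + conjm (series (Phi2R_term A2 t) k) *m conjm x.
Proof.
elim: k => [|k IHk]; first by rewrite /series /= !big_geq // conjm0 !mul0mx addr0.
rewrite doubleS !seriesSr IHk exp_term_double exp_term_doubleS conjmD !mulmxDl.
by rewrite -addrA addrACA.
Qed.

Lemma series_exp_term_doubleS x k :
  series (exp_term x) k.*2.+1 =
  series (Phi1R_term A2 t) k.+1 *m x + conjm (series (Phi2R_term A2 t) k) *m conjm x.
Proof.
by rewrite seriesSr series_exp_term_double exp_term_double seriesSr mulmxDl addrAC.
Qed.

Lemma bimexp_eq_Phi : bimexp_eq 0 A2 t (bimat (Phi1R A2 t) (Phi2R A2 t)).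
Proof.
have Phi1_cvgS : (fun k => series (Phi1R_term A2 t) k.+1) @ \oo --> Phi1R A2 t.
  by rewrite cvg_shiftS; exact: cvg_Phi1R.
move=> x; rewrite /bimat; apply: cvg_even_odd.
- rewrite (eq_cvg _ _ (series_exp_term_double x)).
  exact: cvgD (cvg_mulmxr cvg_Phi1R) (cvg_mulmxr (cvg_conjm cvg_Phi2R)).
- rewrite (eq_cvg _ _ (series_exp_term_doubleS x)).
  exact: cvgD (cvg_mulmxr Phi1_cvgS) (cvg_mulmxr (cvg_conjm cvg_Phi2R)).
Qed.

End RealTime.
End ZeroBimatrix.

Theorem corollary2 (R : realType) (n : nat) (A2 : 'M[R[i]]_n) :
  (forall t : R, 0 <= t ->
     [/\ cvgn (series (Phi1R_term A2 t)),
         cvgn (series (Phi2R_term A2 t)) &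
         bimexp_eq 0 A2 t (bimat (Phi1R A2 t) (Phi2R A2 t))])
  /\
  (forall (k : nat) (x : 'cV[R[i]]_n),
     bipow 0 A2 k x = bimat (Phi1Z A2 k) (Phi2Z A2 k) x).
Proof.
split=> [t t_ge0 | k x]; last exact: bipow0_Phi.
by split; [exact: cvg_Phi1R | exact: cvg_Phi2R | exact: bimexp_eq_Phi].
Qed.
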